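(* Let $\mathfrak{U}$ be a Banach algebra which coincides with the smallest closed subalgebra of $\mathfrak{U}$ containing every closed subalgebra $\mathfrak{V}\subseteq\mathfrak{U}$ for which $\mathfrak{V}^\sharp$ is symmetrically pseudo-amenable. Then for every Banach $\mathfrak{U}$-bimodule $X$, every bounded central derivation $\delta:\mathfrak{U}\to X$ is identically zero.
   Context: $\mathfrak{V}^\sharp=\mathfrak{V}\oplus\mathbb{C}1$ is the unitization of $\mathfrak{V}$ with the $\ell^1$-norm (a unit is adjoined even if $\mathfrak{V}$ is unital). A derivation $\delta:\mathfrak{U}\to X$ is central if $\delta(\mathfrak{U})\subseteq\mathcal{Z}_{\mathfrak{U}}(X)=\{x\in X: ax=xa\ \forall a\in\mathfrak{U}\}$; a derivation is a linear map with $\delta(ab)=\delta(a)b+a\delta(b)$. For a Banach algebra $\mathfrak{A}$, $\mathfrak{A}\widehat{\otimes}\mathfrak{A}$ is the projective tensor product with $a(b\otimes c)=ab\otimes c$, $(b\otimes c)a=b\otimes ca$, $\pi(b\otimes c)=bc$ (extended linearly and continuously); the flip is $(b\otimes c)^\circ=c\otimes b$ and $\mathbf{t}$ is symmetric if $\mathbf{t}^\circ=\mathbf{t}$. A symmetric approximate diagonal is a net $\{\mathbf{t}_\lambda\}$ (not necessarily bounded) of symmetric elements with $a\mathbf{t}_\lambda-\mathbf{t}_\lambda a\to0$ and $\pi(\mathbf{t}_\lambda)a\to a$ for all $a\in\mathfrak{A}$; $\mathfrak{A}$ is symmetrically pseudo-amenable if it has one. *)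

From HB Require Import structures.
From mathcomp Require Import all_boot all_order all_algebra.
From mathcomp Require Import all_classical all_reals topology normedtype sequences.
From mathcomp Require Export complex.
Set Implicit Arguments. Unset Strict Implicit. Unset Printing Implicit Defensive.
Import Order.TTheory GRing.Theory Num.Theory numFieldNormedType.Exports.
Local Open Scope ring_scope.
Local Open Scope classical_set_scope.

Section BanachDefs.
Variable K : numFieldType.

Definition banach_algebra (U : completeNormedModType K) (mul : U -> U -> U) : Prop :=
  ((forall a b c, mul a (b + c) = mul a b + mul a c) /\
      (forall a b c, mul (a + b) c = mul a c + mul b c) /\
      (forall (k : K) a b, mul (k *: a) b = k *: mul a b) /\
      (forall (k : K) a b, mul a (k *: b) = k *: mul a b) /\
      (forall a b c, mul a (mul b c) = mul (mul a b) c) /\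
      (forall a b, `|mul a b| <= `|a| * `|b|)).

Definition closed_subalgebra (U : completeNormedModType K) (mul : U -> U -> U)
  (W : set U) : Prop :=
  (closed W /\ W 0 /\
      (forall x y, W x -> W y -> W (x + y)) /\
      (forall (k : K) x, W x -> W (k *: x)) /\
      (forall x y, W x -> W y -> W (mul x y))).

Definition gen_closed_subalgebra (U : completeNormedModType K) (mul : U -> U -> U)
  (S : set U) : set U :=
  \bigcap_(W in [set W | closed_subalgebra mul W /\ S `<=` W]) W.

(** The unitization V^# = V (+) K 1, with the l^1 norm, realized on pairs
    (v, l) : U * K with v in V. *)
Section Unitization.
Variables (U : completeNormedModType K) (mul : U -> U -> U) (V : set U).

Definition inU (x : U * K) : Prop := V x.1.
Definition addU (x y : U * K) : U * K := (x.1 + y.1, x.2 + y.2).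
Definition subU (x y : U * K) : U * K := (x.1 - y.1, x.2 - y.2).
Definition scaleU (k : K) (x : U * K) : U * K := (k *: x.1, k * x.2).
Definition mulU (x y : U * K) : U * K :=
  (mul x.1 y.1 + x.2 *: y.1 + y.2 *: x.1, x.2 * y.2).
Definition normU (x : U * K) : K := `|x.1| + `|x.2|.

(** Bounded bilinear forms V^# x V^# -> K of norm <= 1, i.e. the unit ball of
    the dual of the projective tensor product V^# (^x) V^#. *)
Definition unit_bilin (B : U * K -> U * K -> K) : Prop :=
  ((forall (k : K) x y z, inU x -> inU y -> inU z ->
         B (addU (scaleU k x) y) z = k * B x z + B y z) /\
      (forall (k : K) x y z, inU x -> inU y -> inU z ->
         B z (addU (scaleU k x) y) = k * B z x + B z y) /\
      (forall x y, inU x -> inU y -> `|B x y| <= normU x * normU y)).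

(** An element of V^# (^x) V^# is represented by sum_n b n (x) c n with
    sum_n ||b n|| ||c n|| < oo. *)
Definition tensor_rep (b c : nat -> U * K) : Prop :=
  (forall n, inU (b n)) /\ (forall n, inU (c n)) /\
  exists M : K, forall N, \sum_(n < N) normU (b n) * normU (c n) <= M.

Definition tensor_eval (B : U * K -> U * K -> K) (b c : nat -> U * K) : K :=
  limn (series (fun n => B (b n) (c n))).

Definition tensor_pi (b c : nat -> U * K) : U * K :=
  (limn (series (fun n => (mulU (b n) (c n)).1)),
   limn (series (fun n => (mulU (b n) (c n)).2))).

(** V^# is symmetrically pseudo-amenable: there is a net (t_l) in
    V^# (^x) V^# of symmetric elements with a t_l - t_l a -> 0 and
    pi(t_l) a -> a for every a in V^#.  Nets are indexed by directed sets;
    equality / norm in the projective tensor product are expressed through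
    the norm-one bounded bilinear forms (the unit ball of its dual). *)
Definition unitization_sym_pseudo_amenable : Prop :=
  exists (I : Type) (le : I -> I -> Prop) (b c : I -> nat -> U * K),
    ((exists i : I, True) /\
        (forall i j k, le i j -> le j k -> le i k) /\
        (forall i j, exists k, le i k /\ le j k) /\
        (forall i, tensor_rep (b i) (c i)) /\
        (forall i B, unit_bilin B -> tensor_eval B (b i) (c i) = tensor_eval B (c i) (b i)) /\
        (forall a, inU a -> forall eps : K, 0 < eps -> exists i0, forall i, le i0 i ->
           forall B, unit_bilin B ->
             `|tensor_eval B (fun n => mulU a (b i n)) (c i)
               - tensor_eval B (b i) (fun n => mulU (c i n) a)| <= eps) /\
        (forall a, inU a -> forall eps : K, 0 < eps -> exists i0, forall i, le i0 i ->
           normU (subU (mulU (tensor_pi (b i) (c i)) a) a) <= eps)).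
End Unitization.

Definition banach_bimodule (U X : completeNormedModType K) (mul : U -> U -> U)
  (lm : U -> X -> X) (rm : X -> U -> X) : Prop :=
  ((forall a x y, lm a (x + y) = lm a x + lm a y) /\
      (forall a b x, lm (a + b) x = lm a x + lm b x) /\
      (forall (k : K) a x, lm (k *: a) x = k *: lm a x /\ lm a (k *: x) = k *: lm a x) /\
      (forall a x y, rm (x + y) a = rm x a + rm y a) /\
      (forall a b x, rm x (a + b) = rm x a + rm x b) /\
      (forall (k : K) a x, rm x (k *: a) = k *: rm x a /\ rm (k *: x) a = k *: rm x a) /\
      (forall a b x, lm a (lm b x) = lm (mul a b) x /\ rm (rm x a) b = rm x (mul a b)
                     /\ rm (lm a x) b = lm a (rm x b)) /\
      (exists C : K, forall a x, `|lm a x| <= C * `|a| * `|x| /\ `|rm x a| <= C * `|a| * `|x|)).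

Definition derivation (U X : completeNormedModType K) (mul : U -> U -> U)
  (lm : U -> X -> X) (rm : X -> U -> X) (d : U -> X) : Prop :=
  ((forall a b, d (a + b) = d a + d b) /\
      (forall (k : K) a, d (k *: a) = k *: d a) /\
      (forall a b, d (mul a b) = rm (d a) b + lm a (d b))).

Definition bounded_map (U X : completeNormedModType K) (d : U -> X) : Prop :=
  exists C : K, forall a, `|d a| <= C * `|a|.

Definition central_map (U X : completeNormedModType K)
  (lm : U -> X -> X) (rm : X -> U -> X) (d : U -> X) : Prop :=
  forall a b, lm a (d b) = rm (d b) a.

End BanachDefs.

From HB Require Import structures.
From mathcomp Require Import all_boot all_order all_algebra.
From mathcomp Require Import all_classical all_reals topology normedtype sequences.
From mathcomp Require Import complex.
From mathcomp Require Import ring.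
Set Implicit Arguments. Unset Strict Implicit. Unset Printing Implicit Defensive.
Import Order.TTheory GRing.Theory Num.Theory numFieldNormedType.Exports.
Local Open Scope ring_scope.
Local Open Scope classical_set_scope.
Local Open Scope complex_scope.

(* Suppose [d a <> 0] for some [a] in a closed subalgebra [V] whose unitization
   [V^#] is symmetrically pseudo-amenable, and pick a bounded functional [h]
   with [h (d a) <> 0] (Hahn-Banach, obtained from Zorn's lemma on dominated
   graphs and complexification).  Extend [d] to [V^#] by [D (v, l) = d v] and
   consider the bilinear forms [S b c = D b . c - b . D c] and
   [T b c = D b . (a c - c a)].  Centrality of [d] gives
     [S (a b) c - S b (c a) = 2 D a . (b c) + T b c - T c b].
   Pair this identity with an element [t] of a symmetric approximate diagonal
   and apply [h]: the left side is small since [a t ~ t a], the [T] terms cancel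
   since [t] is symmetric, and [pi t ~ 1], so [h (d a)] is arbitrarily small.
   Hence [d] vanishes on every such [V]; its kernel is a closed subalgebra, so
   it contains the closed subalgebra they generate, which is [U]. *)

(** * The Hahn-Banach theorem *)

Section SublinearHahnBanach.
Variables (R : realType) (X : lmodType R[i]) (p : X -> R).
Hypothesis p_subadd : forall x y, p (x + y) <= p x + p y.
Hypothesis p_homo : forall (r : R) x, 0 <= r -> p (r%:C *: x) = r * p x.

(* The graph of a real-linear functional, defined on a subspace of [X] and
   dominated by [p]. *)
Definition dominated_graph (G : set (X * R)) :=
  [/\ forall x r s, G (x, r) -> G (x, s) -> r = s,
      forall x y r s, G (x, r) -> G (y, s) -> G (x + y, r + s),
      forall (a : R) x r, G (x, r) -> G (a%:C *: x, a * r) &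
      forall x r, G (x, r) -> r <= p x].

Lemma sublinear0 : p 0 = 0.
Proof. by rewrite -(scaler0 _ 0%:C) p_homo // mul0r. Qed.

Lemma sublinear_scale_ge (a : R) x : a * p x <= p (a%:C *: x).
Proof.
have [a0|a0] := leP 0 a; first by rewrite p_homo.
have na0 : 0 <= - a by rewrite oppr_ge0 ltW.
have := p_subadd (a%:C *: x) ((- a)%:C *: x).
by rewrite -scalerDl -rmorphD subrr scale0r sublinear0 (p_homo _ na0) mulNr subr_ge0.
Qed.

Lemma dominated_graph_bigcup (F : set (set (X * R))) :
  (forall G, F G -> dominated_graph G) -> total_on F subset ->
  dominated_graph (\bigcup_(G in F) G).
Proof.
move=> Fdom tot; split.
- move=> x r s [A FA Ar] [B FB Bs]; have [AB|BA] := tot _ _ FA FB.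
  + by have [fB _ _ _] := Fdom _ FB; apply: fB (AB _ Ar) Bs.
  + by have [fA _ _ _] := Fdom _ FA; apply: fA Ar (BA _ Bs).
- move=> x y r s [A FA Ar] [B FB Bs]; have [AB|BA] := tot _ _ FA FB.
  + by exists B => //; have [_ dB _ _] := Fdom _ FB; apply: dB (AB _ Ar) Bs.
  + by exists A => //; have [_ dA _ _] := Fdom _ FA; apply: dA Ar (BA _ Bs).
- by move=> a x r [A FA Ar]; exists A => //; have [_ _ sA _] := Fdom _ FA; exact: sA.
- by move=> x r [A FA Ar]; have [_ _ _ pA] := Fdom _ FA; exact: pA.
Qed.

Lemma dominated_graph0 G : dominated_graph G -> G !=set0 -> G (0, 0).
Proof. by move=> [_ _ GZ _] [[x r] /(GZ 0)]; rewrite scale0r mul0r. Qed.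

Lemma dominated_graphB G x r y s : dominated_graph G ->
  G (x, r) -> G (y, s) -> G (x - y, r - s).
Proof.
move=> [_ GD GZ _] Gx /(GZ (-1)); rewrite mulN1r rmorphN rmorph1 scaleN1r.
exact: GD.
Qed.

(* The value [c] at a new direction [y] must satisfy
   [r - p (w - y) <= c <= p (u + y) - s] whenever [G (w, r)] and [G (u, s)];
   the lower bounds never exceed the upper ones because [p] is subadditive. *)
Lemma extension_value G y : dominated_graph G -> G (0, 0) ->
  exists c, (forall w r, G (w, r) -> r - p (w - y) <= c) /\
            (forall u s, G (u, s) -> c <= p (u + y) - s).
Proof.
move=> [_ GD _ Gp] G00.
pose S := [set v | exists w r, G (w, r) /\ v = r - p (w - y)].
have S_le : forall u s, G (u, s) -> ubound S (p (u + y) - s).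
  move=> u s Gu _ [w [r [Gw ->]]]; rewrite lerBrDr addrAC lerBlDr.
  apply: le_trans (Gp _ _ (GD _ _ _ _ Gw Gu)) _.
  have -> : w + u = (w - y) + (u + y) by rewrite addrCA subrK addrC.
  by rewrite [leRHS]addrC p_subadd.
have supS : has_sup S.
  by split; [exists (0 - p (0 - y)), 0, 0 | exists (p (0 + y) - 0); exact: S_le G00].
exists (sup S); split=> [w r Gw|u s Gu]; first by apply: sup_upper_bound => //; exists w, r.
by apply: ge_sup; [case: supS | exact: S_le Gu].
Qed.

Definition graph_extension G y c : set (X * R) :=
  [set q | exists x r (t : R), G (x, r) /\ q = (x + t%:C *: y, r + t * c)].

Lemma graph_extension_functional G y c : dominated_graph G ->
  ~ (exists r, G (y, r)) ->
  forall x r s, graph_extension G y c (x, r) -> graph_extension G y c (x, s) -> r = s.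
Proof.
move=> domG ny x r s [x1 [r1 [t1 [G1 [-> ->]]]]] [x2 [r2 [t2 [G2 [E ->]]]]].
have [domf _ domZ _] := domG.
have [t12|t12] := eqVneq t1 t2.
  by subst t2; move: G1; rewrite (addIr _ E) => G1; rewrite (domf _ _ _ G1 G2).
have t12C : (t1 - t2)%:C != 0 by rewrite fmorph_eq0 subr_eq0.
exfalso; apply: ny; exists ((t1 - t2)^-1 * (r2 - r1)).
have -> : y = (t1 - t2)^-1%:C *: (x2 - x1).
  rewrite fmorphV; apply: (scalerI t12C); rewrite scalerKV // rmorphB scalerBl.
  by rewrite -[x2](addrK (t2%:C *: y)) -E addrAC [x1 + _]addrC addrK.
exact: domZ (dominated_graphB domG G2 G1).
Qed.

Lemma graph_extension_dominated G y c : dominated_graph G ->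
  (forall w r, G (w, r) -> r - p (w - y) <= c) ->
  (forall u s, G (u, s) -> c <= p (u + y) - s) ->
  forall x r, graph_extension G y c (x, r) -> r <= p x.
Proof.
move=> [_ _ GZ Gp] c_lb c_ub _ _ [x [r [t [Gx [-> ->]]]]].
have [t0|t0|->] := ltrgtP t 0; last by rewrite scale0r mul0r !addr0 Gp.
- have s0 : 0 < - t by rewrite oppr_gt0.
  have Gw := GZ (- t)^-1 _ _ Gx.
  have -> : x + t%:C *: y = (- t)%:C *: ((- t)^-1%:C *: x - y).
    by rewrite scalerBr scalerA -rmorphM mulfV ?lt0r_neq0 // scale1r rmorphN scaleNr opprK.
  rewrite (p_homo _ (ltW s0)) -[r](mulfVK (lt0r_neq0 s0)).
  have -> : r / - t * - t + t * c = - t * (r / - t - c).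
    by rewrite mulrBr [- t * (r / - t)]mulrC mulNr opprK.
  by rewrite ler_pM2l // lerBlDr -lerBlDl (mulrC r) c_lb.
- have Gu := GZ t^-1 _ _ Gx.
  have -> : x + t%:C *: y = t%:C *: (t^-1%:C *: x + y).
    by rewrite scalerDr scalerA -rmorphM mulfV ?lt0r_neq0 // scale1r.
  rewrite (p_homo _ (ltW t0)) -[r](mulfVK (lt0r_neq0 t0)).
  have -> : r / t * t + t * c = t * (r / t + c) by rewrite mulrDr [t * (r / t)]mulrC.
  by rewrite ler_pM2l // addrC -lerBrDr (mulrC r) c_ub.
Qed.

Lemma dominated_graph_extension G y : dominated_graph G -> G (0, 0) ->
  ~ (exists r, G (y, r)) -> exists G', dominated_graph G' /\ G `<` G'.
Proof.
move=> domG G00 ny; have [c [c_lb c_ub]] := extension_value y domG G00.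
have [_ GD GZ _] := domG.
exists (graph_extension G y c); split; last split.
- split; first exact: graph_extension_functional.
  + move=> _ _ _ _ [x1 [r1 [t1 [G1 [-> ->]]]]] [x2 [r2 [t2 [G2 [-> ->]]]]].
    exists (x1 + x2), (r1 + r2), (t1 + t2); split; first exact: GD.
    by rewrite rmorphD scalerDl mulrDl; congr (_, _); rewrite addrACA.
  + move=> a _ _ [x1 [r1 [t1 [G1 [-> ->]]]]].
    exists (a%:C *: x1), (a * r1), (a * t1); split; first exact: GZ.
    by rewrite scalerDr scalerA -rmorphM mulrDr mulrA.
  + exact: graph_extension_dominated.
- by move=> [x r] Gx; exists x, r, 0; rewrite scale0r mul0r !addr0.
- move=> /(_ (y, c)) Gy; apply: ny; exists c; apply: Gy.
  by exists 0, 0, 1; rewrite scale1r mul1r !add0r.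
Qed.

Lemma line_graph_dominated x0 :
  dominated_graph [set q | exists a : R, q = (a%:C *: x0, a * p x0)].
Proof.
split.
- move=> _ r s [a [-> ->]] [b [E ->]].
  have : (a - b)%:C *: x0 = 0 by rewrite rmorphB scalerBl E subrr.
  move/eqP; rewrite scaler_eq0 fmorph_eq0 subr_eq0 => /orP[/eqP -> //|/eqP x00].
  by rewrite x00 sublinear0 !mulr0.
- by move=> _ _ _ _ [a [-> ->]] [b [-> ->]]; exists (a + b); rewrite rmorphD scalerDl mulrDl.
- by move=> c _ _ [a [-> ->]]; exists (c * a); rewrite rmorphM scalerA mulrA.
- by move=> _ _ [a [-> ->]]; exact: sublinear_scale_ge.
Qed.

Theorem hahn_banach_sublinear x0 : exists g : X -> R,
  [/\ forall x y, g (x + y) = g x + g y, forall (r : R) x, g (r%:C *: x) = r * g x,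
      forall x, g x <= p x & g x0 = p x0].
Proof.
pose G0 := [set q | exists a : R, q = (a%:C *: x0, a * p x0)].
have G0x0 : G0 (x0, p x0) by exists 1; rewrite scale1r mul1r.
pose P G := dominated_graph G /\ (G = set0 \/ G0 `<=` G).
have [G [[domG G0G] maxG]] : exists G, P G /\ forall G', G `<` G' -> ~ P G'.
  apply: Zorn_bigcup => F FP totF; split.
    by apply: dominated_graph_bigcup => // G /FP[].
  have [[G [FG G0G]]|noG0] := pselect (exists G, F G /\ G0 `<=` G).
    by right; apply: subset_trans G0G _; exact: bigcup_sup.
  left; apply/seteqP; split => // q [G FG Gq].
  have [_ [G_0|G0G]] := FP _ FG; first by rewrite G_0 in Gq.
  by case: noG0; exists G.
have {}G0G : G0 `<=` G.
  case: G0G => // G_0; case: (maxG G0); last by split; [exact: line_graph_dominated | right].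
  by rewrite G_0; split => // /(_ _ G0x0).
have G00 : G (0, 0) by apply: dominated_graph0 => //; exists (x0, p x0); exact: G0G.
have totG y : exists r, G (y, r).
  apply: contrapT => ny; have [G' [domG' GG']] := dominated_graph_extension domG G00 ny.
  by apply: (maxG G' GG'); split => //; right; apply: subset_trans G0G (properW GG').
have [Gf GD GZ Gp] := domG; pose g y := projT1 (cid (totG y)).
have Gg y : G (y, g y) by exact: projT2 (cid (totG y)).
exists g; split=> [x y|r x|x|].
- exact: Gf (Gg _) (GD _ _ _ _ (Gg x) (Gg y)).
- exact: Gf (Gg _) (GZ r _ _ (Gg x)).
- exact: Gp.
- exact: Gf (Gg _) (G0G _ G0x0).
Qed.

End SublinearHahnBanach.

Section Complexification.
Variables (R : realType) (X : lmodType R[i]) (g : X -> R).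
Hypothesis gD : forall x y, g (x + y) = g x + g y.
Hypothesis gZ : forall (r : R) x, g (r%:C *: x) = r * g x.

Definition complexification x : R[i] := (g x)%:C - 'i * (g ('i *: x))%:C.

Lemma complexificationD x y :
  complexification (x + y) = complexification x + complexification y.
Proof. by rewrite /complexification scalerDr !gD !rmorphD mulrDr opprD addrACA. Qed.

Lemma complexificationR (r : R) x : complexification (r%:C *: x) = r%:C * complexification x.
Proof.
rewrite /complexification scalerA [_ * r%:C]mulrC -scalerA !gZ !rmorphM.
by rewrite mulrBr mulrCA.
Qed.

Lemma complexification_i x : complexification ('i *: x) = 'i * complexification x.
Proof.
have gN y : g (- y) = - g y.
  by have := gZ (-1) y; rewrite rmorphN rmorph1 scaleN1r mulN1r.
rewrite /complexification scalerA -expr2 sqr_i scaleN1r gN rmorphN.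
by rewrite mulrBr mulrA -expr2 sqr_i mulN1r mulrN !opprK addrC.
Qed.

Lemma complexificationZ k x : complexification (k *: x) = k * complexification x.
Proof.
rewrite [k]complexE scalerDl -scalerA complexificationD complexification_i.
by rewrite !(complexificationR (complex.Re k), complexificationR (complex.Im k)) mulrDl mulrA.
Qed.

End Complexification.

Section BoundedFunctional.
Variables (R : realType) (X : normedModType R[i]).

Lemma normr_real (x : X) : `|x| = (complex.Re `|x|)%:C.
Proof. by apply/esym/RRe_real/ger0_real. Qed.

Lemma normr_realC (r : R) : `|r%:C| = `|r|%:C.
Proof. by rewrite normc_def /= expr0n /= addr0 sqrtr_sqr. Qed.

Lemma exists_functional_nonzero (x0 : X) : x0 != 0 -> exists h : X -> R[i],
  [/\ forall x y, h (x + y) = h x + h y, forall k x, h (k *: x) = k * h x,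
      forall x, `|h x| <= 2 * `|x| & h x0 != 0].
Proof.
move=> x00; pose p (x : X) : R := complex.Re `|x|.
have pE x : `|x| = (p x)%:C := normr_real x.
have p_subadd x y : p (x + y) <= p x + p y.
  by have := ler_normD x y; rewrite !pE -rmorphD lecR.
have p_homo (r : R) x : 0 <= r -> p (r%:C *: x) = r * p x.
  by move=> r0; rewrite /p normrZ normr_realC ger0_norm // [`|x|]pE /= mul0r subr0.
have [g [gD gZ gp gx0]] := hahn_banach_sublinear p_subadd p_homo x0.
have g_abs x : `|g x| <= p x.
  rewrite ler_norml gp andbT lerNl -mulN1r -gZ.
  by apply: le_trans (gp _) _; rewrite /p rmorphN rmorph1 scaleN1r normrN.
have p_i x : p ('i *: x) = p x.
  by rewrite /p normrZ normc_def /= expr0n expr1n add0r sqrtr1 mul1r.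
exists (complexification g); split.
- exact: complexificationD.
- exact: complexificationZ.
- move=> x; apply: le_trans (ler_normB _ _) _.
  rewrite normrM !normr_realC normc_def /= expr0n expr1n add0r sqrtr1 mul1r pE.
  have -> : 2 * (p x)%:C = (p x + p x)%:C by rewrite mulr_natl mulr2n rmorphD.
  by rewrite -rmorphD lecR lerD // -(p_i x).
- apply/eqP => hx0; move: x00; rewrite -normr_eq0 pE -gx0.
  have := congr1 (@complex.Re R) hx0.
  by rewrite /complexification /= mul0r mulr0 subrr subr0 => ->; rewrite rmorph0 eqxx.
Qed.

End BoundedFunctional.

(** * Series in complex normed spaces *)

Lemma additive0 (V W : zmodType) (f : V -> W) : {morph f : x y / x + y} -> f 0 = 0.
Proof. by move=> fD; apply: (@addrI _ (f 0)); rewrite -fD !addr0. Qed.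

Lemma additiveB (V W : zmodType) (f : V -> W) : {morph f : x y / x + y} ->
  {morph f : x y / x - y}.
Proof. by move=> fD x y; apply/eqP; rewrite eq_sym subr_eq -fD subrK. Qed.

Lemma series_additive (V W : zmodType) (f : V -> W) (u : nat -> V) :
  {morph f : x y / x + y} -> series (fun n => f (u n)) = (fun N => f (series u N)).
Proof.
by move=> fD; apply: funext => N; rewrite /series /= (big_morph f fD (additive0 fD)).
Qed.

Section SeriesOverComplex.
Variable R : realType.
Local Notation K := R[i].

Lemma bound_normr (V W : normedModType K) (f : V -> W) (C : K) :
  (forall x, `|f x| <= C * `|x|) -> forall x, `|f x| <= `|C| * `|x|.
Proof.
move=> fC x; have C0 : 0 <= C * `|x| by apply: le_trans (fC x).
by rewrite -(normr_id x) -normrM ger0_norm ?fC.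
Qed.

Lemma bounded_additive_cvg (V W : normedModType K) (f : V -> W) (C : K)
    (T : Type) (F : set_system T) {FF : Filter F} (g : T -> V) (l : V) :
  {morph f : x y / x + y} -> (forall x, `|f x| <= C * `|x|) ->
  g @ F --> l -> (fun t => f (g t)) @ F --> f l.
Proof.
move=> fD /bound_normr fC /cvgrPdist_le gl; apply/cvgrPdist_le => e e0.
have C1 : 0 < `|C| + 1 by rewrite ltr_wpDl.
apply: filterS (gl _ (divr_gt0 e0 C1)) => t glt.
rewrite -(additiveB fD); apply: le_trans (fC _) _.
apply: le_trans (_ : (`|C| + 1) * `|l - g t| <= e); last by rewrite mulrC -ler_pdivlMr.
by rewrite ler_wpM2r // lerDl.
Qed.

Lemma bounded_additive_continuous (V W : normedModType K) (f : V -> W) (C : K) :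
  {morph f : x y / x + y} -> (forall x, `|f x| <= C * `|x|) -> continuous f.
Proof. by move=> fD fC x; exact: bounded_additive_cvg fD fC cvg_id. Qed.

Section BoundedAdditiveSeries.
Variables (V W : normedModType K) (f : V -> W) (C : K).
Hypotheses (fD : {morph f : x y / x + y}) (fC : forall x, `|f x| <= C * `|x|).

Lemma is_cvg_series_additive (u : nat -> V) :
  cvgn (series u) -> cvgn (series (fun n => f (u n))).
Proof.
move=> /(bounded_additive_cvg fD fC) fu; rewrite series_additive //.
by apply/cvg_ex; exists (f (limn (series u))).
Qed.

Lemma lim_series_additive (u : nat -> V) : cvgn (series u) ->
  limn (series (fun n => f (u n))) = f (limn (series u)).
Proof.
by move=> /(bounded_additive_cvg fD fC) fu; rewrite series_additive //; exact: cvg_lim.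
Qed.

End BoundedAdditiveSeries.

Lemma cvgn_series_dominated (V : completeNormedModType K) (u : nat -> V)
    (w : nat -> K) (M : K) :
  (forall n, `|u n| <= w n) -> (forall N, \sum_(n < N) w n <= M) -> cvgn (series u).
Proof.
move=> uw wM; pose v n := complex.Re (w n).
have v_ge0 n : 0 <= w n by apply: le_trans (uw n).
have wE n : w n = (v n)%:C by apply/esym/RRe_real/ger0_real.
have sumE N : \sum_(n < N) w n = (\sum_(n < N) v n)%:C.
  by rewrite rmorph_sum; apply: eq_bigr => n _; exact: wE.
have cv : cvgn (series v).
  apply: nondecreasing_is_cvgn.
    by apply: nondecreasing_series => n _ _; rewrite -ler0c -wE.
  exists (complex.Re M) => _ [N _ <-]; have := wM N.
  by rewrite sumE lecE /series /= big_mkord => /andP[].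
move/cauchy_cvgP/cauchy_seriesP: cv => cv.
apply/cauchy_cvgP/cauchy_seriesP => e e0.
have eE : e = (complex.Re e)%:C by apply/esym/RRe_real/gtr0_real.
have re0 : 0 < complex.Re e by rewrite -ltcR -eE.
apply: filterS (cv _ re0) => n hn; apply: le_lt_trans (ler_norm_sum _ _ _) _.
apply: le_lt_trans (ler_sum _ (fun k _ => uw k)) _.
rewrite (eq_bigr _ (fun k _ => wE k)) -rmorph_sum eE ltcR.
exact: le_lt_trans (ler_norm _) hn.
Qed.

Lemma is_cvg_series_scalar (V : normedModType K) (h : V -> K^o) (C : K) (x : V)
    (w : nat -> K^o) :
  {morph h : x y / x + y} -> (forall k v, h (k *: v) = k * h v) ->
  (forall v, `|h v| <= C * `|v|) -> h x != 0 ->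
  cvgn (series (fun n => w n *: x)) -> cvgn (series w).
Proof.
move=> hD hZ hC hx /(is_cvg_series_additive hD hC) /(is_cvg_seriesZ (k := (h x)^-1)).
suff -> : (h x)^-1 *: (fun n => h (w n *: x)) = w by [].
apply: funext => n; change ((h x)^-1 * h (w n *: x) = w n).
by rewrite hZ mulrC mulfK.
Qed.

End SeriesOverComplex.

Section ComplexEstimates.
Variable R : realType.
Local Notation K := R[i].

Lemma small_normr_eq0 (z C : K) : 0 <= C -> (forall e, 0 < e -> `|z| <= C * e) -> z = 0.
Proof.
move=> C0 zC; apply/normr0_eq0/eqP; apply: contraT => z0.
have zp : 0 < `|z| by rewrite lt_neqAle eq_sym z0 normr_ge0.
have C1 : 0 < C + 1 by rewrite ltr_wpDl.
have := zC _ (divr_gt0 zp C1); rewrite mulrA ler_pdivlMr // [leLHS]mulrC ler_pM2r //.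
by rewrite gerDl ler10.
Qed.

Lemma perturbed_scalar_bound (z A P T q p e s : K) : 0 <= q -> 0 <= p ->
  `|T + T| <= s * e -> T = A + P * z -> `|A| <= q * p -> p + `|P - 1| <= e ->
  `|z| <= (s + 2 * q + 2 * `|z|) * e.
Proof.
move=> q0 p0 hT TE hA hP; rewrite {}TE in hT.
have pe : p <= e by apply: le_trans hP; rewrite lerDl.
have Pe : `|P - 1| <= e by apply: le_trans hP; rewrite lerDr.
have ez : z + z = (A + P * z + (A + P * z)) - (A + A) - ((P - 1) * z + (P - 1) * z) by ring.
apply: le_trans (_ : `|z + z| <= _); first by rewrite -mulr2n normrMn mulr2n lerDl.
rewrite ez; apply: le_trans (ler_normB _ _) _.
apply: le_trans (lerD (ler_normB _ _) (ler_normD _ _)) _.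
have hA' : `|A| <= q * e by apply: le_trans hA _; rewrite ler_wpM2l.
have hz : `|(P - 1) * z| <= e * `|z| by rewrite normrM ler_wpM2r.
apply: le_trans (lerD (lerD hT (le_trans (ler_normD _ _) (lerD hA' hA'))) (lerD hz hz)) _.
suff -> : (s + 2 * q + 2 * `|z|) * e = s * e + (q * e + q * e) + (e * `|z| + e * `|z|).
  by [].
by ring.
Qed.

End ComplexEstimates.

(** * The unitization and the extended bimodule actions *)

Section UnitizationAlgebra.
Variable R : realType.
Local Notation K := R[i].
Variables (U : completeNormedModType K) (mul : U -> U -> U).
Hypothesis HU : banach_algebra mul.
Local Notation mulU := (mulU mul).

Lemma mulU_linl k x y z :
  mulU (addU (scaleU k x) y) z = addU (scaleU k (mulU x z)) (mulU y z).
Proof.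
case: HU => _ [mDl [mZl _]]; rewrite /mulU /addU /scaleU /=.
congr (_, _); last by rewrite mulrDl mulrA.
rewrite mDl mZl scalerDl -(scalerA k x.2) !scalerDr (scalerA z.2 k) [z.2 * k]mulrC.
by rewrite -(scalerA k z.2) (addrACA (k *: mul x.1 z.1)) (addrACA (k *: mul x.1 z.1 + _)).
Qed.

Lemma mulU_linr k x y z :
  mulU z (addU (scaleU k x) y) = addU (scaleU k (mulU z x)) (mulU z y).
Proof.
case: HU => mDr [_ [_ [mZr _]]]; rewrite /mulU /addU /scaleU /=.
congr (_, _); last by rewrite mulrDr mulrCA.
rewrite mDr mZr !scalerDr scalerDl (scalerA z.2 k) [z.2 * k]mulrC -(scalerA k z.2).
by rewrite -(scalerA k x.2) (addrACA (k *: mul z.1 x.1)) (addrACA (k *: mul z.1 x.1 + _)).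
Qed.

Lemma subU_lin k (x y x' y' : U * K) :
  subU (addU (scaleU k x) y) (addU (scaleU k x') y') =
  addU (scaleU k (subU x x')) (subU y y').
Proof.
by rewrite /subU /addU /scaleU /=; congr (_, _); rewrite opprD addrACA ?scalerBr ?mulrBr.
Qed.

Lemma normU_ge0 (p : U * K) : 0 <= normU p.
Proof. exact: addr_ge0. Qed.

Lemma normU_mulU x y : normU (mulU x y) <= normU x * normU y.
Proof.
case: HU => _ [_ [_ [_ [_ mN]]]]; rewrite /normU /mulU /= normrM.
have -> : (`|x.1| + `|x.2|) * (`|y.1| + `|y.2|) =
  `|x.1| * `|y.1| + `|x.2| * `|y.1| + `|y.2| * `|x.1| + `|x.2| * `|y.2| by ring.
rewrite lerD2r; apply: le_trans (ler_normD _ _) _; rewrite normrZ lerD2r.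
by apply: le_trans (ler_normD _ _) _; rewrite normrZ lerD2r mN.
Qed.

Lemma normU_subU (x y : U * K) : normU (subU x y) <= normU x + normU y.
Proof. by rewrite /normU /= addrACA; apply: lerD; apply: ler_normB. Qed.

Lemma normU_unit_defect p : normU (subU (mulU p (0, 1)) (0, 1)) = `|p.1| + `|p.2 - 1|.
Proof.
have mul0 : mul p.1 0 = 0 by case: HU => mD _; exact: (additive0 (mD p.1)).
by rewrite /normU /subU /mulU /= mul0 scaler0 scale1r !add0r subr0 mulr1.
Qed.

End UnitizationAlgebra.

Section ScaledForm.
Variable R : realType.
Local Notation K := R[i].
Variables (U X : completeNormedModType K).

Definition bilinearU (Phi : U * K -> U * K -> X) : Prop :=
  (forall k x y z, Phi (addU (scaleU k x) y) z = k *: Phi x z + Phi y z) /\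
  (forall k x y z, Phi z (addU (scaleU k x) y) = k *: Phi z x + Phi z y).

Lemma unit_bilin_scaled (V : set U) (Phi : U * K -> U * K -> X) (h : X -> K) (Ch L : K) :
  bilinearU Phi -> {morph h : x y / x + y} -> (forall k x, h (k *: x) = k * h x) ->
  (forall x, `|h x| <= Ch * `|x|) -> 0 <= Ch -> 0 <= L ->
  (forall b c, `|Phi b c| <= L * (normU b * normU c)) ->
  unit_bilin V (fun b c => h (Phi b c) / (1 + Ch * L)).
Proof.
move=> [PhiDl PhiDr] hD hZ hC Ch0 L0 PhiC.
have CL1 : 0 < 1 + Ch * L by rewrite ltr_pwDl // mulr_ge0.
split; [|split] => [k x y z _ _ _|k x y z _ _ _|x y _ _].
- by rewrite PhiDl hD hZ mulrDl mulrA.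
- by rewrite PhiDr hD hZ mulrDl mulrA.
rewrite normrM normfV (gtr0_norm CL1) ler_pdivrMr // mulrC.
apply: le_trans (hC _) _; apply: le_trans (ler_wpM2l Ch0 (PhiC x y)) _.
by rewrite mulrA ler_wpM2r ?mulr_ge0 ?normU_ge0 // lerDr.
Qed.

End ScaledForm.

Section UnitizedBimodule.
Variable R : realType.
Local Notation K := R[i].
Variables (U : completeNormedModType K) (mul : U -> U -> U).
Variables (X : completeNormedModType K) (lm : U -> X -> X) (rm : X -> U -> X).
Hypothesis HX : banach_bimodule mul lm rm.
Local Notation mulU := (mulU mul).

Lemma lmDr a x y : lm a (x + y) = lm a x + lm a y.
Proof. by case: HX. Qed.
Lemma lmDl a b x : lm (a + b) x = lm a x + lm b x.
Proof. by case: HX => _ []. Qed.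
Lemma lmZl (k : K) a x : lm (k *: a) x = k *: lm a x.
Proof. by case: HX => _ [_ [/(_ k a x)[]]]. Qed.
Lemma lmZr (k : K) a x : lm a (k *: x) = k *: lm a x.
Proof. by case: HX => _ [_ [/(_ k a x)[]]]. Qed.
Lemma rmDl a x y : rm (x + y) a = rm x a + rm y a.
Proof. by case: HX => _ [_ [_ []]]. Qed.
Lemma rmDr a b x : rm x (a + b) = rm x a + rm x b.
Proof. by case: HX => _ [_ [_ [_ []]]]. Qed.
Lemma rmZr (k : K) a x : rm x (k *: a) = k *: rm x a.
Proof. by case: HX => _ [_ [_ [_ [_ [/(_ k a x)[]]]]]]. Qed.
Lemma rmZl (k : K) a x : rm (k *: x) a = k *: rm x a.
Proof. by case: HX => _ [_ [_ [_ [_ [/(_ k a x)[]]]]]]. Qed.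
Lemma lmA a b x : lm a (lm b x) = lm (mul a b) x.
Proof. by case: HX => _ [_ [_ [_ [_ [_ [/(_ a b x)[]]]]]]]. Qed.
Lemma rmA a b x : rm (rm x a) b = rm x (mul a b).
Proof. by case: HX => _ [_ [_ [_ [_ [_ [/(_ a b x)[_ []]]]]]]]. Qed.
Lemma lm_rmA a b x : rm (lm a x) b = lm a (rm x b).
Proof. by case: HX => _ [_ [_ [_ [_ [_ [/(_ a b x)[_ []]]]]]]]. Qed.

Definition lmU (p : U * K) (x : X) : X := lm p.1 x + p.2 *: x.
Definition rmU (x : X) (p : U * K) : X := rm x p.1 + p.2 *: x.

Lemma rmU_mulU x b c : rmU (rmU x b) c = rmU x (mulU b c).
Proof.
rewrite /rmU /mulU /= rmDl rmZl rmA !rmDr !rmZr scalerDr !scalerA.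
by rewrite (mulrC c.2 b.2) !addrA.
Qed.

Lemma lmU_mulU x b c : lmU b (lmU c x) = lmU (mulU b c) x.
Proof.
rewrite /lmU /mulU /= lmDr lmZr lmA !lmDl !lmZl scalerDr !scalerA.
by rewrite !addrA (addrAC (lm (mul b.1 c.1) x)).
Qed.

Lemma lmU_rmU x b c : lmU b (rmU x c) = rmU (lmU b x) c.
Proof.
rewrite /lmU /rmU /= lmDr lmZr rmDl rmZl lm_rmA !scalerDr !scalerA.
by rewrite (mulrC c.2 b.2) !addrA (addrAC (lm b.1 (rm x c.1))).
Qed.

Lemma lmU_linr k p x y : lmU p (k *: x + y) = k *: lmU p x + lmU p y.
Proof. by rewrite /lmU lmDr lmZr !scalerDr scalerA mulrC -scalerA addrACA. Qed.

Lemma rmU_linl k p x y : rmU (k *: x + y) p = k *: rmU x p + rmU y p.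
Proof. by rewrite /rmU rmDl rmZl !scalerDr scalerA mulrC -scalerA addrACA. Qed.

Lemma lmU_linl k p q x : lmU (addU (scaleU k p) q) x = k *: lmU p x + lmU q x.
Proof. by rewrite /lmU /= lmDl lmZl scalerDl -scalerA scalerDr addrACA. Qed.

Lemma rmU_linr k x p q : rmU x (addU (scaleU k p) q) = k *: rmU x p + rmU x q.
Proof. by rewrite /rmU /= rmDr rmZr scalerDl -scalerA scalerDr addrACA. Qed.

Lemma lmUD p x y : lmU p (x + y) = lmU p x + lmU p y.
Proof. by rewrite /lmU lmDr scalerDr addrACA. Qed.

Lemma rmUD p x y : rmU (x + y) p = rmU x p + rmU y p.
Proof. by rewrite /rmU rmDl scalerDr addrACA. Qed.

Lemma rmUB x p q : rmU x (subU p q) = rmU x p - rmU x q.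
Proof.
rewrite /rmU /= (additiveB (fun a b => rmDr a b x)) scalerBl.
by rewrite opprD addrACA.
Qed.

End UnitizedBimodule.

Section CentralDerivationForms.
Variable R : realType.
Local Notation K := R[i].
Variables (U : completeNormedModType K) (mul : U -> U -> U).
Hypothesis HU : banach_algebra mul.
Variables (X : completeNormedModType K) (lm : U -> X -> X) (rm : X -> U -> X).
Hypothesis HX : banach_bimodule mul lm rm.
Variable d : U -> X.
Hypothesis Hd : derivation mul lm rm d.
Hypothesis Hc : central_map lm rm d.
Local Notation mulU := (mulU mul).
Local Notation lmU := (lmU lm).
Local Notation rmU := (rmU rm).

Definition dU (p : U * K) : X := d p.1.

Lemma dU_lin k p q : dU (addU (scaleU k p) q) = k *: dU p + dU q.
Proof. by case: Hd => dD [dZ _]; rewrite /dU /= dD dZ. Qed.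

Lemma dU_mulU b c : dU (mulU b c) = rmU (dU b) c + lmU b (dU c).
Proof.
case: Hd => dD [dZ dM]; rewrite /dU /rmU /lmU /mulU /= !dD !dZ dM.
by rewrite !addrA (addrAC (rm (d b.1) c.1) (c.2 *: d b.1))
  (addrAC (rm (d b.1) c.1 + lm b.1 (d c.1)) (c.2 *: d b.1)).
Qed.

Lemma lmU_dU p q : lmU p (dU q) = rmU (dU q) p.
Proof. by rewrite /lmU /rmU /dU Hc. Qed.

Definition skew_form b c : X := rmU (dU b) c - lmU b (dU c).
Definition commutator_form a b c : X := rmU (dU b) (subU (mulU a c) (mulU c a)).

Lemma skew_form_mulU a b c :
  skew_form (mulU a b) c - skew_form b (mulU c a) =
  rmU (dU a) (mulU b c) + rmU (dU a) (mulU b c)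
    + commutator_form a b c - commutator_form a c b.
Proof.
rewrite /skew_form /commutator_form !(rmUB HX).
rewrite dU_mulU lmU_dU (rmUD HX) !(rmU_mulU HX) lmU_dU.
rewrite dU_mulU (lmUD HX) (lmU_rmU HX) (lmU_mulU HX) !lmU_dU (rmU_mulU HX).
set A := rmU (dU a) (mulU b c); set B := rmU (dU b) (mulU a c).
set B' := rmU (dU b) (mulU c a); set C := rmU (dU c) (mulU a b).
set C' := rmU (dU c) (mulU b a).
clearbody A B B' C C'.
rewrite opprB [C' + A]addrC !addrA (addrAC (A + B) (- C) A) (addrAC A B A).
rewrite (addrAC (A + A + B - C) C' (- B')) (addrAC (A + A + B) (- C) (- B')).
by rewrite opprB addrA (addrAC (A + A + B - B') (- C) C').
Qed.

Lemma skew_form_bilinear : bilinearU skew_form.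
Proof.
split=> k x y z; rewrite /skew_form dU_lin.
  by rewrite (rmU_linl HX) (lmU_linl HX) scalerBr opprD addrACA.
by rewrite (rmU_linr HX) (lmU_linr HX) scalerBr opprD addrACA.
Qed.

Lemma commutator_form_bilinear a : bilinearU (commutator_form a).
Proof.
split=> k x y z; rewrite /commutator_form; first by rewrite dU_lin (rmU_linl HX).
by rewrite (mulU_linr HU) (mulU_linl HU) subU_lin (rmU_linr HX).
Qed.

Variables (cd cm : K).
Hypotheses (cd0 : 0 <= cd) (cm0 : 0 <= cm).
Hypothesis Hcd : forall a, `|d a| <= cd * `|a|.
Hypothesis Hlm : forall a x, `|lm a x| <= cm * `|a| * `|x|.
Hypothesis Hrm : forall a x, `|rm x a| <= cm * `|a| * `|x|.

Lemma dU_bound p : `|dU p| <= cd * normU p.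
Proof. by apply: le_trans (Hcd _) _; rewrite ler_wpM2l // lerDl. Qed.

Lemma rmU_bound x p : `|rmU x p| <= (cm + 1) * normU p * `|x|.
Proof.
apply: le_trans (ler_normD _ _) _; rewrite normrZ.
have -> : (cm + 1) * normU p * `|x| =
  cm * `|p.1| * `|x| + (cm * `|p.2| + `|p.1| + `|p.2|) * `|x| by rewrite /normU; ring.
by apply: lerD; rewrite ?Hrm // ler_wpM2r // ler_wpDl // addr_ge0 ?mulr_ge0.
Qed.

Lemma lmU_bound x p : `|lmU p x| <= (cm + 1) * normU p * `|x|.
Proof.
apply: le_trans (ler_normD _ _) _; rewrite normrZ.
have -> : (cm + 1) * normU p * `|x| =
  cm * `|p.1| * `|x| + (cm * `|p.2| + `|p.1| + `|p.2|) * `|x| by rewrite /normU; ring.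
by apply: lerD; rewrite ?Hlm // ler_wpM2r // ler_wpDl // addr_ge0 ?mulr_ge0.
Qed.

Lemma skew_form_bound b c :
  `|skew_form b c| <= 2 * (cm + 1) * cd * (normU b * normU c).
Proof.
have cm1 : 0 <= cm + 1 by rewrite addr_ge0.
apply: le_trans (ler_normB _ _) _; apply: le_trans (lerD (rmU_bound _ _) (lmU_bound _ _)) _.
have -> : 2 * (cm + 1) * cd * (normU b * normU c) =
  (cm + 1) * normU c * (cd * normU b) + (cm + 1) * normU b * (cd * normU c) by ring.
by apply: lerD; apply: ler_wpM2l (dU_bound _); rewrite mulr_ge0 ?normU_ge0.
Qed.

Lemma commutator_form_bound a b c :
  `|commutator_form a b c| <= 2 * (cm + 1) * cd * normU a * (normU b * normU c).
Proof.
have cm1 : 0 <= cm + 1 by rewrite addr_ge0.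
have ac_bound : normU (subU (mulU a c) (mulU c a)) <= 2 * normU a * normU c.
  apply: le_trans (normU_subU _ _) _.
  apply: le_trans (lerD (normU_mulU HU _ _) (normU_mulU HU _ _)) _.
  suff -> : 2 * normU a * normU c = normU a * normU c + normU c * normU a by [].
  by ring.
apply: le_trans (rmU_bound _ _) _.
have -> : 2 * (cm + 1) * cd * normU a * (normU b * normU c) =
  (cm + 1) * (2 * normU a * normU c) * (cd * normU b) by ring.
by apply: (ler_pM _ _ (ler_wpM2l cm1 ac_bound) (dU_bound b)); rewrite ?mulr_ge0 ?normU_ge0.
Qed.

End CentralDerivationForms.

Section TensorSeries.
Variable R : realType.
Local Notation K := R[i].
Variables (U X : completeNormedModType K).
Implicit Types (b c : nat -> U * K).

Definition summable_tensor b c : Prop :=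
  exists M : K, forall N, \sum_(n < N) normU (b n) * normU (c n) <= M.

Definition tensor_apply (Phi : U * K -> U * K -> X) b c : X :=
  limn (series (fun n => Phi (b n) (c n))).

Lemma summable_tensorC b c : summable_tensor b c -> summable_tensor c b.
Proof. by case=> M bcM; exists M => N; under eq_bigr do rewrite mulrC. Qed.

Lemma is_cvg_tensor_series b c (u : nat -> X) (L : K) :
  summable_tensor b c -> 0 <= L ->
  (forall n, `|u n| <= L * (normU (b n) * normU (c n))) -> cvgn (series u).
Proof.
move=> [M bcM] L0 uL; apply: (cvgn_series_dominated uL (M := L * M)) => N.
by rewrite -mulr_sumr ler_wpM2l.
Qed.

Lemma is_cvg_tensor_apply (Phi : U * K -> U * K -> X) (L : K) b c :
  0 <= L -> (forall p q, `|Phi p q| <= L * (normU p * normU q)) ->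
  summable_tensor b c -> cvgn (series (fun n => Phi (b n) (c n))).
Proof. by move=> L0 PhiL bc; apply: is_cvg_tensor_series bc L0 _ => n; exact: PhiL. Qed.

Lemma tensor_eval_scaled (Phi : U * K -> U * K -> X) (h : X -> K) (Ch k : K) b c :
  {morph h : x y / x + y} -> (forall x, `|h x| <= Ch * `|x|) ->
  cvgn (series (fun n => Phi (b n) (c n))) ->
  tensor_eval (fun p q => h (Phi p q) / k) b c = h (tensor_apply Phi b c) / k.
Proof.
move=> hD hC cvPhi; pose hk (x : X) : K^o := h x / k.
have hkD : {morph hk : x y / x + y} by move=> x y; rewrite /hk hD mulrDl.
have hkC x : `|hk x| <= Ch * `|k^-1| * `|x|.
  by rewrite normrM mulrAC ler_wpM2r // hC.
exact: (lim_series_additive hkD hkC cvPhi).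
Qed.

End TensorSeries.

Section TensorProducts.
Variable R : realType.
Local Notation K := R[i].
Variables (U : completeNormedModType K) (mul : U -> U -> U).
Hypothesis HU : banach_algebra mul.
Implicit Types (b c : nat -> U * K).

Lemma summable_tensor_mull p b c :
  summable_tensor b c -> summable_tensor (fun n => mulU mul p (b n)) c.
Proof.
case=> M bcM; exists (normU p * M) => N.
apply: le_trans (_ : \sum_(n < N) normU p * (normU (b n) * normU (c n)) <= _).
  by apply: ler_sum => n _; rewrite mulrA ler_wpM2r ?normU_ge0 ?(normU_mulU HU).
by rewrite -mulr_sumr ler_wpM2l ?normU_ge0.
Qed.

Lemma summable_tensor_mulr p b c :
  summable_tensor b c -> summable_tensor b (fun n => mulU mul (c n) p).
Proof.
case=> M bcM; exists (normU p * M) => N.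
apply: le_trans (_ : \sum_(n < N) normU p * (normU (b n) * normU (c n)) <= _).
  apply: ler_sum => n _; apply: le_trans (ler_wpM2l (normU_ge0 _) (normU_mulU HU _ _)) _.
  by rewrite (mulrC (normU (c n))) mulrCA.
by rewrite -mulr_sumr ler_wpM2l ?normU_ge0.
Qed.

End TensorProducts.

(** * Vanishing on symmetrically pseudo-amenable subalgebras *)

Section Vanishing.
Variable R : realType.
Local Notation K := R[i].
Variables (U : completeNormedModType K) (mul : U -> U -> U).
Hypothesis HU : banach_algebra mul.
Variables (X : completeNormedModType K) (lm : U -> X -> X) (rm : X -> U -> X).
Hypothesis HX : banach_bimodule mul lm rm.
Variable d : U -> X.
Hypotheses (Hd : derivation mul lm rm d) (Hc : central_map lm rm d).
Variables (cd cm : K).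
Hypotheses (cd0 : 0 <= cd) (cm0 : 0 <= cm).
Hypothesis Hcd : forall a, `|d a| <= cd * `|a|.
Hypothesis Hlm : forall a x, `|lm a x| <= cm * `|a| * `|x|.
Hypothesis Hrm : forall a x, `|rm x a| <= cm * `|a| * `|x|.
Variables (h : X -> K) (Ch : K).
Hypotheses (hD : {morph h : x y / x + y}) (hZ : forall k x, h (k *: x) = k * h x).
Hypotheses (hC : forall x, `|h x| <= Ch * `|x|) (Ch0 : 0 <= Ch).
Variable a : U.
(* Only needed to see that the scalar part of [pi t] is a convergent series. *)
Hypothesis hda : h (d a) != 0.

Local Notation mulU := (mulU mul).
Local Notation rmU := (rmU rm).
Local Notation dU := (dU d).
Local Notation tensor_pi := (tensor_pi mul).
Local Notation skew_form := (skew_form lm rm d).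
Local Notation commutator_form := (commutator_form mul rm d).

Let ap : U * K := (a, 0).
Let Lskew := 2 * (cm + 1) * cd.
Let Lcomm := 2 * (cm + 1) * cd * normU ap.
Let pi_action p q := rmU (d a) (mulU p q).

Lemma Lskew_ge0 : 0 <= Lskew. Proof. by rewrite !mulr_ge0 ?addr_ge0. Qed.
Lemma Lcomm_ge0 : 0 <= Lcomm. Proof. by rewrite mulr_ge0 ?Lskew_ge0 ?normU_ge0. Qed.

Lemma pi_action_bound p q : `|pi_action p q| <= (cm + 1) * `|d a| * (normU p * normU q).
Proof.
apply: le_trans (rmU_bound cm0 Hrm _ _) _; rewrite [leLHS]mulrAC.
by rewrite ler_wpM2l ?mulr_ge0 ?addr_ge0 // (normU_mulU HU).
Qed.

Lemma is_cvg_skew_series b c : summable_tensor b c ->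
  cvgn (series (fun n => skew_form (b n) (c n))).
Proof. exact: is_cvg_tensor_apply Lskew_ge0 (skew_form_bound cd0 cm0 Hcd Hlm Hrm). Qed.

Lemma is_cvg_commutator_series b c : summable_tensor b c ->
  cvgn (series (fun n => commutator_form ap (b n) (c n))).
Proof. exact: is_cvg_tensor_apply Lcomm_ge0 (commutator_form_bound HU cd0 cm0 Hcd Hrm ap). Qed.

Lemma is_cvg_pi_action_series b c : summable_tensor b c ->
  cvgn (series (fun n => pi_action (b n) (c n))).
Proof. by apply: is_cvg_tensor_apply pi_action_bound; rewrite mulr_ge0 ?addr_ge0. Qed.

Lemma tensor_skew_identity b c : summable_tensor b c ->
  tensor_apply skew_form (fun n => mulU ap (b n)) c
    - tensor_apply skew_form b (fun n => mulU (c n) ap) =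
  tensor_apply pi_action b c + tensor_apply pi_action b c
    + tensor_apply (commutator_form ap) b c - tensor_apply (commutator_form ap) c b.
Proof.
move=> bc.
pose s1 := series (fun n => skew_form (mulU ap (b n)) (c n)).
pose s2 := series (fun n => skew_form (b n) (mulU (c n) ap)).
pose s3 := series (fun n => pi_action (b n) (c n)).
pose s4 := series (fun n => commutator_form ap (b n) (c n)).
pose s5 := series (fun n => commutator_form ap (c n) (b n)).
have c1 : cvgn s1 := is_cvg_skew_series (summable_tensor_mull HU ap bc).
have c2 : cvgn s2 := is_cvg_skew_series (summable_tensor_mulr HU ap bc).
have c3 : cvgn s3 := is_cvg_pi_action_series bc.
have c4 : cvgn s4 := is_cvg_commutator_series bc.
have c5 : cvgn s5 := is_cvg_commutator_series (summable_tensorC bc).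
have c33 : cvgn (s3 + s3) by exact: is_cvgD.
have c334 : cvgn (s3 + s3 + s4) by exact: is_cvgD.
have E : s1 - s2 = s3 + s3 + s4 - s5.
  apply: funext => N; rewrite /s1 /s2 /s3 /s4 /s5 /series !fctE.
  rewrite -sumrB -!big_split -sumrB /=.
  by apply: eq_bigr => n _; rewrite (skew_form_mulU HX Hd Hc).
by rewrite /tensor_apply -/s1 -/s2 -/s3 -/s4 -/s5 -limB // E limB // limD // limD.
Qed.

Lemma tensor_pi_action b c : summable_tensor b c ->
  tensor_apply pi_action b c = rm (d a) (tensor_pi b c).1 + (tensor_pi b c).2 *: d a.
Proof.
move=> bc; pose p1 n := (mulU (b n) (c n)).1; pose p2 n : K^o := (mulU (b n) (c n)).2.
have bc_bound n : normU (mulU (b n) (c n)) <= 1 * (normU (b n) * normU (c n)).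
  by rewrite mul1r (normU_mulU HU).
have cv1 : cvgn (series p1).
  by apply: is_cvg_tensor_series bc ler01 _ => n; apply: le_trans (bc_bound n); rewrite lerDl.
have cv2a : cvgn (series (fun n => p2 n *: d a)).
  apply: is_cvg_tensor_series bc (normr_ge0 (d a)) _ => n.
  rewrite normrZ mulrC ler_wpM2l // -[leRHS]mul1r; apply: le_trans (bc_bound n).
  by rewrite lerDr.
have cv2 : cvgn (series p2) := is_cvg_series_scalar hD hZ hC hda cv2a.
have rmD : {morph rm (d a) : x y / x + y} by move=> x y; exact: (rmDr HX).
have rmC x : `|rm (d a) x| <= cm * `|d a| * `|x| by rewrite mulrAC Hrm.
have scD : {morph (fun w : K^o => w *: d a) : x y / x + y} by move=> x y; exact: scalerDl.
have scC (w : K^o) : `|w *: d a| <= `|d a| * `|w| by rewrite normrZ mulrC.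
rewrite /tensor_apply.
have -> : series (fun n => pi_action (b n) (c n)) =
    series (fun n => rm (d a) (p1 n)) + series (fun n => p2 n *: d a).
  by apply: funext => N; rewrite /series fctE -big_split.
rewrite limD //; last exact: (is_cvg_series_additive rmD rmC cv1).
by rewrite (lim_series_additive rmD rmC cv1) (lim_series_additive scD scC cv2).
Qed.

Let kskew := 1 + Ch * Lskew.
Let kcomm := 1 + Ch * Lcomm.
Let Bskew p q := h (skew_form p q) / kskew.
Let Bcomm p q := h (commutator_form ap p q) / kcomm.

Lemma Bskew_unit V : unit_bilin V Bskew.
Proof.
exact: unit_bilin_scaled (skew_form_bilinear HX Hd) hD hZ hC Ch0 Lskew_ge0
  (skew_form_bound cd0 cm0 Hcd Hlm Hrm).
Qed.

Lemma Bcomm_unit V : unit_bilin V Bcomm.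
Proof.
exact: unit_bilin_scaled (commutator_form_bilinear HU HX Hd ap) hD hZ hC Ch0 Lcomm_ge0
  (commutator_form_bound HU cd0 cm0 Hcd Hrm ap).
Qed.

Lemma tensor_estimate b c (e : K) : summable_tensor b c ->
  tensor_eval Bcomm b c = tensor_eval Bcomm c b ->
  `|tensor_eval Bskew (fun n => mulU ap (b n)) c
    - tensor_eval Bskew b (fun n => mulU (c n) ap)| <= e ->
  normU (subU (mulU (tensor_pi b c) (0, 1)) (0, 1)) <= e ->
  `|h (d a)| <= (kskew + 2 * (Ch * (cm * `|d a|)) + 2 * `|h (d a)|) * e.
Proof.
move=> bc sym diag; rewrite (normU_unit_defect HU) => unit.
have kskew0 : 0 < kskew by rewrite ltr_pwDl // mulr_ge0 ?Lskew_ge0.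
have kcomm0 : 0 < kcomm by rewrite ltr_pwDl // mulr_ge0 ?Lcomm_ge0.
have cb := is_cvg_commutator_series bc.
have cb' := is_cvg_commutator_series (summable_tensorC bc).
have sl := is_cvg_skew_series (summable_tensor_mull HU ap bc).
have sr := is_cvg_skew_series (summable_tensor_mulr HU ap bc).
rewrite /Bcomm (tensor_eval_scaled kcomm hD hC cb) (tensor_eval_scaled kcomm hD hC cb') in sym.
apply (mulIf (invr_neq0 (lt0r_neq0 kcomm0))) in sym.
rewrite /Bskew (tensor_eval_scaled kskew hD hC sl) (tensor_eval_scaled kskew hD hC sr) in diag.
rewrite -mulrBl -(additiveB hD) tensor_skew_identity // (additiveB hD) !hD sym addrK in diag.
rewrite normrM normfV (gtr0_norm kskew0) ler_pdivrMr // (mulrC e) in diag.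
apply: perturbed_scalar_bound (normr_ge0 _) diag _ _ unit.
- by rewrite !mulr_ge0.
- by rewrite tensor_pi_action // hD hZ.
- apply: le_trans (hC _) _; rewrite -mulrA ler_wpM2l //.
  by rewrite mulrAC Hrm.
Qed.

Lemma amenable_estimate V : V 0 -> V a -> unitization_sym_pseudo_amenable mul V ->
  forall e : K, 0 < e ->
  `|h (d a)| <= (kskew + 2 * (Ch * (cm * `|d a|)) + 2 * `|h (d a)|) * e.
Proof.
move=> V0 Va [I [le [b [c [_ [_ [le_dir [rep [sym [diag unit]]]]]]]]]] e e0.
have [i0 diag_i0] := diag ap Va e e0.
have [i1 unit_i1] := unit (0, 1) V0 e e0.
have [k [i0k i1k]] := le_dir i0 i1; have [_ [_ bc]] := rep k.
exact: tensor_estimate bc (sym k _ (Bcomm_unit V)) (diag_i0 k i0k _ (Bskew_unit V))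
  (unit_i1 k i1k).
Qed.

End Vanishing.

Section CentralDerivations.
Variable R : realType.
Local Notation K := R[i].
Variables (U : completeNormedModType K) (mul : U -> U -> U).
Hypothesis HU : banach_algebra mul.
Variables (X : completeNormedModType K) (lm : U -> X -> X) (rm : X -> U -> X).
Hypothesis HX : banach_bimodule mul lm rm.
Variable d : U -> X.
Hypotheses (Hd : derivation mul lm rm d) (Hc : central_map lm rm d).
Variable cd : K.
Hypothesis Hcd : forall a, `|d a| <= cd * `|a|.

Lemma bimodule_bound : exists2 C : K, 0 <= C &
  forall a x, `|lm a x| <= C * `|a| * `|x| /\ `|rm x a| <= C * `|a| * `|x|.
Proof.
case: HX => _ [_ [_ [_ [_ [_ [_ [C HC]]]]]]]; exists `|C| => // a x.
have normC y : `|y| <= C * `|a| * `|x| -> `|y| <= `|C| * `|a| * `|x|.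
  move=> yC; have Cax : 0 <= C * `|a| * `|x| := le_trans (normr_ge0 _) yC.
  by rewrite -(normr_id a) -(normr_id x) -!normrM ger0_norm.
by case: (HC a x) => /normC lmC /normC rmC.
Qed.

Lemma derivation_kernel_closed_subalgebra : closed_subalgebra mul [set x | d x = 0].
Proof.
case: Hd => dD [dZ dM]; split; [|split; [|split; [|split]]].
- change (closed (d @^-1` [set 0])); apply: preimage_closed.
    by move=> x _; exact: bounded_additive_continuous dD Hcd x.
  exact/accessible_closed_set1/hausdorff_accessible/norm_hausdorff.
- exact: additive0 dD.
- by move=> x y /= dx dy; rewrite dD dx dy addr0.
- by move=> k x /= dx; rewrite dZ dx scaler0.
- move=> x y /= dx dy; rewrite dM dx dy (additive0 (lmDr HX x)).
  by rewrite (additive0 (fun u v => rmDl HX y u v)) addr0.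
Qed.

Lemma central_derivation_vanishes V : V 0 -> unitization_sym_pseudo_amenable mul V ->
  forall a, V a -> d a = 0.
Proof.
move=> V0 HA a Va; apply/eqP; apply: contraT => da0.
have [h [hD hZ hC hda]] := exists_functional_nonzero da0.
have [cm cm0 HCm] := bimodule_bound.
have Hlm a' x : `|lm a' x| <= cm * `|a'| * `|x| by case: (HCm a' x).
have Hrm a' x : `|rm x a'| <= cm * `|a'| * `|x| by case: (HCm a' x).
have est := amenable_estimate HU HX Hd Hc (normr_ge0 cd) cm0 (bound_normr Hcd) Hlm Hrm
  hD hZ hC (ler0n _ 2) hda V0 Va HA.
move: hda; rewrite (small_normr_eq0 _ est) ?eqxx //.
by rewrite !addr_ge0 // !mulr_ge0 // addr_ge0.
Qed.

End CentralDerivations.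

Theorem corollary6p2 (R : realType)
  (U : completeNormedModType R[i]) (mul : U -> U -> U)
  (HU : banach_algebra mul)
  (Hgen : gen_closed_subalgebra mul
            (\bigcup_(V in [set V | closed_subalgebra mul V /\
                                    unitization_sym_pseudo_amenable mul V]) V)
          = setT)
  (X : completeNormedModType R[i]) (lm : U -> X -> X) (rm : X -> U -> X)
  (HX : banach_bimodule mul lm rm)
  (d : U -> X) (Hd : derivation mul lm rm d) (Hb : bounded_map d)
  (Hc : central_map lm rm d) :
  forall a : U, d a = 0.
Proof.
move=> a; have [Cd dC] := Hb.
have /(_ [set x | d x = 0]) : gen_closed_subalgebra mul
    (\bigcup_(V in [set V | closed_subalgebra mul V /\
                            unitization_sym_pseudo_amenable mul V]) V) a.
  by rewrite Hgen.
apply; split; first exact: (derivation_kernel_closed_subalgebra HX Hd dC).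
move=> x [V [[_ [V0 _]] HA] Vx].
exact: (central_derivation_vanishes HU HX Hd Hc dC V0 HA Vx).
Qed.
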